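(* Let $(\mathcal A,d)$ be a DGA, let $a,b_1,\dots,b_n\in\mathcal A$ be closed with $|a|$ even and $a\wedge b_i$ exact, and let $\xi_i$ satisfy $d\xi_i=a\wedge b_i$. Fix $j\in\{1,\dots,n\}$, let $\eta_j$ be a closed element of the same degree as $\xi_j$, and set $\xi_j'=\xi_j+\eta_j$. Let $c=\sum_{i=1}^n \overline{\xi_1}\wedge\cdots\wedge\overline{\xi_{i-1}}\wedge b_i\wedge\xi_{i+1}\wedge\cdots\wedge\xi_n$ and let $c'$ be given by the same formula with $\xi_j$ replaced by $\xi_j'$. Then $$c'=c+(-1)^{(|b_j|+1)(n-j+\sum_{i>j}|b_i|)}\Big(\sum_{i=1,\,i\neq j}^n\overline{\xi_1}\wedge\cdots\wedge\widehat{\overline{\xi_j}}\wedge\cdots\wedge\overline{\xi_{i-1}}\wedge b_i\wedge\xi_{i+1}\wedge\cdots\wedge\xi_n\Big)\wedge\eta_j,$$ where $\widehat{\overline{\xi_j}}$ means that the factor $\xi_j$ is omitted.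
   Context: A DGA is a graded-commutative differential graded algebra over $\mathbb R$; $|x|$ denotes degree and $\overline{x}=(-1)^{|x|}x$. *)

From mathcomp Require Import all_boot all_order all_algebra.
From mathcomp Require Import reals.
Set Implicit Arguments. Unset Strict Implicit. Unset Printing Implicit Defensive.
Import Order.TTheory GRing.Theory Num.Theory.
Local Open Scope ring_scope.

Record is_DGA (R : realType) (A : algType R) (G : nat -> A -> Prop) (d : A -> A)
  : Prop := {
  G_zero : forall k, G k 0;
  G_add : forall k x y, G k x -> G k y -> G k (x + y);
  G_scale : forall k (r : R) x, G k x -> G k (r *: x);
  G_span : forall x : A, exists (m : nat) (y : nat -> A),
      (forall k, G k (y k)) /\ x = \sum_(k < m) y k;
  G_direct : forall (m : nat) (y : nat -> A),
      (forall k, G k (y k)) -> \sum_(k < m) y k = 0 -> forall k, (k < m)%N -> y k = 0;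
  G_one : G 0 1;
  G_mul : forall p q x y, G p x -> G q y -> G (p + q)%N (x * y);
  G_comm : forall p q x y, G p x -> G q y -> x * y = ((-1) ^+ (p * q) : R) *: (y * x);
  d_add : forall x y, d (x + y) = d x + d y;
  d_scale : forall (r : R) x, d (r *: x) = r *: d x;
  d_deg : forall p x, G p x -> G p.+1 (d x);
  d_sq : forall x, d (d x) = 0;
  d_Leibniz : forall p x y, G p x ->
      d (x * y) = d x * y + ((-1) ^+ p : R) *: (x * d y)
}.

Definition dga_closed (A : Type) (z : A) (d : A -> A) (x : A) : Prop := d x = z.
Definition dga_exact (A : Type) (d : A -> A) (x : A) : Prop := exists y, d y = x.

Definition dga_bar (R : realType) (A : algType R) (p : nat) (x : A) : A :=
  ((-1) ^+ p : R) *: x.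

Definition c_factor (R : realType) (A : algType R) (px : nat -> nat)
  (b xi : nat -> A) (i k : nat) : A :=
  if (k < i)%N then dga_bar (px k) (xi k) else if k == i then b i else xi k.

Definition dga_c (R : realType) (A : algType R) (n : nat) (px : nat -> nat)
  (b xi : nat -> A) : A :=
  \sum_(1 <= i < n.+1) \prod_(1 <= k < n.+1) c_factor px b xi i k.

From mathcomp Require Import all_boot all_order all_algebra.
From mathcomp Require Import reals.
Import Order.TTheory GRing.Theory Num.Theory.
Local Open Scope ring_scope.

(* Only the j-th factor of each summand of c changes, and it does so additively:
   xi_j becomes xi_j + eta (or its bar).  Multilinearity splits off the extra term,
   and graded commutativity moves eta to the right end past the factors
   k = j+1, ..., n.  Since |xi_k| and |b_k| have opposite parities (|a| is even),
   the degree of those factors is n - j + sum_{k>j} |b_k| mod 2, up to the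
   correction [j < i] coming from b_i, which cancels against the bar on eta. *)

Section BigNatSplit.

Context {T : Type} {idx : T} {op : Monoid.law idx}.

Lemma big_nat_split_at m j p (F : nat -> T) : (m <= j < p)%N ->
  \big[op/idx]_(m <= k < p) F k =
  op (\big[op/idx]_(m <= k < j) F k) (op (F j) (\big[op/idx]_(j.+1 <= k < p) F k)).
Proof.
by case/andP=> mj jp; rewrite (big_cat_nat mj (ltnW jp)) (big_ltn jp).
Qed.

Lemma big_nat_skip m j p (F : nat -> T) : (m <= j < p)%N ->
  \big[op/idx]_(m <= k < p | k != j) F k =
  op (\big[op/idx]_(m <= k < j) F k) (\big[op/idx]_(j.+1 <= k < p) F k).
Proof.
case/andP=> mj jp; rewrite (big_cat_nat mj (ltnW jp)) (big_ltn_cond jp) eqxx.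
congr (op _ _); rewrite big_nat_cond [RHS]big_nat_cond; apply: eq_bigl => k.
  by case/boolP: (m <= k < j)%N => //= /andP[_ kj]; rewrite ltn_eqF.
by case/boolP: (j.+1 <= k < p)%N => //= /andP[jk _]; rewrite gtn_eqF.
Qed.

End BigNatSplit.

Lemma sum_nat_indicator m p i :
  (\sum_(m <= k < p) (k == i))%N = (m <= i < p)%N.
Proof.
rewrite -big_mkcond sum1_count count_uniq_mem ?iota_uniq // mem_iota.
have [mp | pm] := leqP m p; first by rewrite subnKC.
rewrite (eqP (ltnW pm)) addn0 ltnNge andbN.
by have [mi|//] := leqP m i; rewrite /= ltnNge (leq_trans (ltnW pm) mi).
Qed.

Lemma odd_sum_nat_eq (F1 F2 : nat -> nat) m p :
  (forall k, (m <= k < p)%N -> odd (F1 k) = odd (F2 k)) ->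
  odd (\sum_(m <= k < p) F1 k)%N = odd (\sum_(m <= k < p) F2 k)%N.
Proof.
elim: p => [|p IH] eqF; first by rewrite !big_geq.
have [mp | pm] := leqP m p; last by rewrite !big_geq.
rewrite !big_nat_recr //= !oddD eqF ?mp ?ltnSn // IH // => k /andP[mk kp].
by apply: eqF; rewrite mk ltnW.
Qed.

Lemma index_suffix_in_range j k p : (j < k < p.+1)%N -> (0 < k <= p)%N.
Proof. by case/andP=> jk; rewrite ltnS => ->; rewrite andbT (leq_ltn_trans _ jk). Qed.

Lemma signr_odd_eq (R : numDomainType) m p :
  odd m = odd p -> ((-1) ^+ m : R) = (-1) ^+ p.
Proof. by move=> eq_mp; rewrite -signr_odd eq_mp signr_odd. Qed.

Section GradedProducts.

Context {R : realType} {A : algType R} {G : nat -> A -> Prop} {d : A -> A}.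
Hypothesis HD : is_DGA G d.

Lemma G_prod_nat (deg : nat -> nat) (F : nat -> A) m p :
  (forall k, (m <= k < p)%N -> G (deg k) (F k)) ->
  G (\sum_(m <= k < p) deg k)%N (\prod_(m <= k < p) F k).
Proof.
move=> GF; rewrite big_nat_cond [X in G _ X]big_nat_cond.
apply: (big_ind2 (fun s x => G s x)).
- exact: G_one HD.
- by move=> s1 x1 s2 x2 Gx1 Gx2; apply: (G_mul HD Gx1 Gx2).
- by move=> k /andP[mkp _]; apply: GF.
Qed.

Context {n : nat} {px pb : nat -> nat} {b xi : nat -> A} {j : nat} {eta : A}.
Hypothesis Gb : forall i, (1 <= i <= n)%N -> G (pb i) (b i).
Hypothesis Gxi : forall i, (1 <= i <= n)%N -> G (px i) (xi i).
Hypothesis odd_px : forall i, (1 <= i <= n)%N -> odd (px i) = odd (pb i).+1.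
Hypothesis j_in : (1 <= j <= n)%N.
Hypothesis Geta : G (px j) eta.

Definition c_factor_deg (i k : nat) : nat := if k == i then pb i else px k.

Lemma G_c_factor i k : (1 <= k <= n)%N ->
  G (c_factor_deg i k) (c_factor px b xi i k).
Proof.
move=> k_in; rewrite /c_factor /c_factor_deg.
case: ltnP => [ki|_].
  by rewrite (ltn_eqF ki) /dga_bar; exact: G_scale HD _ _ _ (Gxi _ k_in).
by case: eqP => [<-|_]; [apply: Gb | apply: Gxi].
Qed.

Lemma odd_c_factor_deg i k : (1 <= k <= n)%N ->
  odd (c_factor_deg i k) = odd ((pb k).+1 + (k == i))%N.
Proof.
move=> k_in; rewrite /c_factor_deg oddD.
by case: eqP => [->|_] /=; rewrite ?addbT ?negbK ?addbF ?odd_px.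
Qed.

Lemma odd_c_factor_deg_suffix i : (i <= n)%N ->
  odd (\sum_(j.+1 <= k < n.+1) c_factor_deg i k)%N =
  odd ((n - j) + \sum_(j.+1 <= k < n.+1) pb k)%N (+) (j < i)%N.
Proof.
move=> i_le_n; rewrite (odd_sum_nat_eq _ (fun k => ((pb k).+1 + (k == i))%N)).
  rewrite big_split /= sum_nat_indicator ltnS i_le_n andbT oddD.
  under eq_bigr do rewrite -addn1.
  by rewrite big_split /= sum_nat_const_nat subSS muln1 addnC oddb.
by move=> k /index_suffix_in_range; apply: odd_c_factor_deg.
Qed.

Let xi' := fun k => if k == j then xi j + eta else xi k.

Lemma c_factor_update_neq i k : k != j ->
  c_factor px b xi' i k = c_factor px b xi i k.
Proof. by move=> kj; rewrite /c_factor /xi' (negbTE kj). Qed.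

Lemma c_factor_update_eq i : i != j ->
  c_factor px b xi' i j =
  c_factor px b xi i j + ((-1) ^+ (px j * (j < i)) : R) *: eta.
Proof.
move=> ij; rewrite /c_factor /xi' eqxx eq_sym (negbTE ij).
by case: ltnP => _; rewrite ?muln0 ?expr0 ?scale1r ?muln1 // /dga_bar scalerDr.
Qed.

Lemma c_summand_update_eq :
  \prod_(1 <= k < n.+1) c_factor px b xi' j k =
  \prod_(1 <= k < n.+1) c_factor px b xi j k.
Proof.
apply: eq_bigr => k _; rewrite /c_factor /xi'.
by case: ltnP => [kj|_]; [rewrite ltn_eqF | case: eqP].
Qed.

Lemma c_summand_update_neq i : (1 <= i <= n)%N -> i != j ->
  \prod_(1 <= k < n.+1) c_factor px b xi' i k =
  \prod_(1 <= k < n.+1) c_factor px b xi i k +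
  ((-1) ^+ ((pb j).+1 * ((n - j) + \sum_(j.+1 <= k < n.+1) pb k)) : R) *:
    ((\prod_(1 <= k < n.+1 | k != j) c_factor px b xi i k) * eta).
Proof.
move=> /andP[_ i_le_n] ij; have j_lt : (1 <= j < n.+1)%N by rewrite ltnS.
rewrite [LHS](big_nat_split_at _ j) // [in RHS](big_nat_split_at _ j) //.
rewrite (big_nat_skip _ j) // c_factor_update_eq //=.
have eq_prefix : \prod_(1 <= k < j) c_factor px b xi' i k =
                 \prod_(1 <= k < j) c_factor px b xi i k.
  by apply: eq_big_nat => k /andP[_ kj]; rewrite c_factor_update_neq // ltn_eqF.
have eq_suffix : \prod_(j.+1 <= k < n.+1) c_factor px b xi' i k =
                 \prod_(j.+1 <= k < n.+1) c_factor px b xi i k.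
  by apply: eq_big_nat => k /andP[jk _]; rewrite c_factor_update_neq // gtn_eqF.
rewrite eq_prefix eq_suffix mulrDl mulrDr; congr (_ + _).
set suffix := \prod_(j.+1 <= k < n.+1) _.
have G_suffix : G (\sum_(j.+1 <= k < n.+1) c_factor_deg i k) suffix.
  by apply: G_prod_nat => k /index_suffix_in_range; apply: G_c_factor.
rewrite -scalerAl (G_comm HD Geta G_suffix) -!scalerAr scalerA mulrA -exprD.
congr (_ *: _); apply: signr_odd_eq.
rewrite -mulnDr !oddM odd_px // oddD odd_c_factor_deg_suffix //.
by rewrite oddb addbCA addbb addbF.
Qed.

End GradedProducts.

Theorem lemma2p6 (R : realType) (A : algType R) (G : nat -> A -> Prop) (d : A -> A)
  (n : nat) (a : A) (pa : nat) (b xi : nat -> A) (pb px : nat -> nat)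
  (j : nat) (eta : A) :
  is_DGA G d ->
  G pa a -> dga_closed 0 d a -> ~~ odd pa ->
  (forall i, (1 <= i <= n)%N -> G (pb i) (b i) /\ dga_closed 0 d (b i)) ->
  (forall i, (1 <= i <= n)%N -> dga_exact d (a * b i)) ->
  (forall i, (1 <= i <= n)%N ->
     (px i).+1 = (pa + pb i)%N /\ G (px i) (xi i) /\ d (xi i) = a * b i) ->
  (1 <= j <= n)%N ->
  G (px j) eta -> dga_closed 0 d eta ->
  let xi' := fun k => if k == j then xi j + eta else xi k in
  dga_c n px b xi' =
    dga_c n px b xi +
    ((-1) ^+ ((pb j).+1 * ((n - j) + \sum_(j.+1 <= i < n.+1) pb i)) : R) *:
      ((\sum_(1 <= i < n.+1 | i != j)
          \prod_(1 <= k < n.+1 | k != j) c_factor px b xi i k) * eta).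
Proof.
move=> HD _ _ pa_even Hb _ Hxi j_in Geta _ xi'.
have Gb i (i_in : (1 <= i <= n)%N) := (Hb i i_in).1.
have Gxi i (i_in : (1 <= i <= n)%N) := (Hxi i i_in).2.1.
have odd_px i : (1 <= i <= n)%N -> odd (px i) = odd (pb i).+1.
  move=> /Hxi[px_deg _]; have := congr1 odd px_deg.
  by rewrite !oddS oddD (negbTE pa_even) addFb => <-; rewrite negbK.
rewrite /dga_c mulr_suml scaler_sumr (bigD1_seq j) ?mem_index_iota ?iota_uniq //=.
rewrite [in RHS](bigD1_seq j) ?mem_index_iota ?iota_uniq //= -addrA.
rewrite c_summand_update_eq -big_split /=; congr (_ + _).
rewrite big_nat_cond [RHS]big_nat_cond; apply: eq_bigr => i.
by rewrite ltnS => /andP[i_in ij]; apply: (c_summand_update_neq HD Gb Gxi odd_px).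
Qed.
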